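(* Every shallow star and every periodic path is unary FA-presentable.
   Context: A template is $(T,\eta,t_0,t_1)$ with $(T,\eta)$ a finite directed tree (a tree with each edge given a direction), $t_0,t_1\in T$, and $t_0$ a leaf. The graph $\mathcal{S}(T,\eta,t_0,t_1)$ is obtained from countably many disjoint copies $(T^{(j)},\eta^{(j)},t_0^{(j)},t_1^{(j)})$, $j\in\{0,1,2,\dots\}$, by identifying the vertices related by the equivalence relation generated by $\{(t_1^{(j)},t_0^{(j+1)}):j\ge 0\}$. If $t_0=t_1$ it is called a shallow star; if $t_0\ne t_1$ a periodic path. A directed graph $(X,\eta)$ is unary FA-presentable if there exist a regular language $L\subseteq a^*$ and a surjection $\phi:L\to X$ such that $\{(u,v)\in L^2:u\phi=v\phi\}$ and $\{(u,v)\in L^2:(u\phi,v\phi)\in\eta\}$ are regular relations (the words $\mathrm{conv}(u,v)$ over $\{a,\$\}^2$, reading $u,v$ in parallel with the shorter padded by $\$$, form regular languages). *)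

From mathcomp Require Import all_boot.
From Stdlib Require Import Relation_Operators.

Set Implicit Arguments.
Unset Strict Implicit.
Unset Printing Implicit Defensive.

Definition undir (V : finType) (eta : rel V) : rel V :=
  fun x y => eta x y || eta y x.

Definition directed_tree (V : finType) (eta : rel V) : Prop :=
  [/\ forall x, ~~ eta x x,
      forall x y, eta x y -> ~~ eta y x,
      forall x y, connect (undir eta) x y
    & forall s : seq V, uniq s -> 3 <= size s -> ~~ cycle (undir eta) s
                                                  ].

(* t is a leaf: it has at most one neighbour (exactly one unless the tree
   is the one-vertex tree) *)
Definition leaf (V : finType) (eta : rel V) (t : V) : Prop :=
  #|[pred y | undir eta t y]| <= 1.

Definition template (V : finType) (eta : rel V) (t0 t1 : V) : Prop :=
  directed_tree eta /\ leaf eta t0.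

Definition shallow_star (V : finType) (eta : rel V) (t0 t1 : V) : Prop :=
  template eta t0 t1 /\ t0 = t1.

Definition periodic_path (V : finType) (eta : rel V) (t0 t1 : V) : Prop :=
  template eta t0 t1 /\ t0 <> t1.

(* copies are indexed by j : nat; vertex t of copy j is (j, t) *)
Definition S_base (V : finType) (t0 t1 : V) (p q : nat * V) : Prop :=
  q.1 = p.1.+1 /\ p.2 = t1 /\ q.2 = t0.

Definition S_equiv (V : finType) (t0 t1 : V) : nat * V -> nat * V -> Prop :=
  clos_refl_sym_trans (nat * V) (@S_base V t0 t1).

Definition S_vert (V : finType) (t0 t1 : V) : Type :=
  { C : nat * V -> Prop | exists y, C = S_equiv t0 t1 y }.

Definition S_edge (V : finType) (eta : rel V) (t0 t1 : V)
  (C D : S_vert t0 t1) : Prop :=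
  exists j u v, eta u v /\ sval C (j, u) /\ sval D (j, v).

Definition regular (A : finType) (L : seq A -> Prop) : Prop :=
  exists (Q : finType) (q0 : Q) (F : pred Q) (d : Q -> A -> Q),
    forall w, L w <-> F (foldl d q0 w).

(* unary words a^n are identified with n; a set of unary words is regular *)
Definition regular_unary (L : nat -> Prop) : Prop :=
  regular (fun w : seq unit => L (size w)).

(* alphabet {a,$}^2 encoded as bool * bool (true = a, false = $);
   conv(a^m, a^n) *)
Definition conv (m n : nat) : seq (bool * bool) :=
  mkseq (fun i => (i < m, i < n)) (maxn m n).

Definition regular_rel (R : nat -> nat -> Prop) : Prop :=
  regular (fun w : seq (bool * bool) => exists m n, w = conv m n /\ R m n).

Definition unary_FA_presentable (X : Type) (E : X -> X -> Prop) : Prop :=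
  exists (L : nat -> Prop) (phi : {u : nat | L u} -> X),
    [/\ regular_unary L,
        (forall x, exists u, phi u = x),
        regular_rel (fun u v => exists (hu : L u) (hv : L v),
                       phi (exist _ u hu) = phi (exist _ v hv))
      & regular_rel (fun u v => exists (hu : L u) (hv : L v),
                       E (phi (exist _ u hu)) (phi (exist _ v hv)))].

From mathcomp Require Import all_boot zify.
From Stdlib Require Import ClassicalEpsilon Relation_Operators.
From Stdlib Require Import ProofIrrelevance FunctionalExtensionality PropExtensionality.

Set Implicit Arguments.
Unset Strict Implicit.
Unset Printing Implicit Defensive.

(* Vertex [t] of copy [j] is encoded by the number [j * #|V| + rank t].  Each
   class of the gluing has a canonical representative, and the codes of the
   representatives form an eventually periodic, hence regular, language.
   Representatives in copies at least three apart are never equal, and are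
   adjacent only through the centre of a shallow star; so equality and
   adjacency of codes are eventually periodic binary relations, and a DFA
   reading [conv u v] recognises such a relation by tracking the common prefix
   and the excess of [u] and [v] modulo the period. *)

Definition asbool (P : Prop) : bool :=
  if excluded_middle_informative P then true else false.

Lemma asboolE (P : Prop) : asbool P <-> P.
Proof. by rewrite /asbool; case: excluded_middle_informative. Qed.

Definition periodic_from (N p : nat) (L : nat -> Prop) : Prop :=
  forall k, N <= k -> L (k + p) <-> L k.

Definition periodic_rel_from (N p : nat) (R : nat -> nat -> Prop) : Prop :=
  [/\ forall m n, N <= m -> N <= n -> R (m + p) (n + p) <-> R m n,
      forall m n, m + N <= n -> R m (n + p) <-> R m n
    & forall m n, n + N <= m -> R (m + p) n <-> R m n].

Lemma regular_rel_ext (R R' : nat -> nat -> Prop) :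
  (forall m n, R m n <-> R' m n) -> regular_rel R' -> regular_rel R.
Proof.
move=> E [Q [q0 [F [d H]]]]; exists Q, q0, F, d => w; rewrite -H.
by split; case=> m [k [-> h]]; exists m, k; split => //; apply/E.
Qed.

Section Reduce.
Variables (N p : nat).

Definition reduce k := if k < N then k else N + (k - N) %% p.

Lemma reduceS k : reduce (reduce k).+1 = reduce k.+1.
Proof.
rewrite /reduce; case: (ltnP k N) => // h.
have -> : ((N + (k - N) %% p).+1 < N) = false by lia.
have -> : (k.+1 < N) = false by lia.
have -> : (N + (k - N) %% p).+1 - N = (k - N) %% p + 1 by lia.
have -> : k.+1 - N = (k - N) + 1 by lia.
by rewrite modnDml.
Qed.

Lemma periodic_fromP L : periodic_from N p L -> forall k, L k <-> L (reduce k).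
Proof.
move=> L_per k; rewrite /reduce; case: ltnP => // h.
have k_eq : k = N + (k - N) %% p + (k - N) %/ p * p.
  by have := divn_eq (k - N) p; lia.
rewrite {1}k_eq; elim: ((k - N) %/ p) => [|q IH]; first by rewrite mul0n addn0.
by rewrite mulSn addnA [_ + p]addnC -addnA addnC L_per //; lia.
Qed.

Hypothesis p_gt0 : 0 < p.

Lemma reduce_lt k : reduce k < N + p.
Proof.
by rewrite /reduce; case: ifP => h; [lia | have := ltn_pmod (k - N) p_gt0; lia].
Qed.

Definition state k : 'I_(N + p) := Ordinal (reduce_lt k).
Arguments state : simpl never.

Lemma stateS k : state (state k).+1 = state k.+1.
Proof. exact/val_inj/reduceS. Qed.

Lemma regular_unary_periodic L : periodic_from N p L -> regular_unary L.
Proof.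
move=> L_per; pose step (c : 'I_(N + p)) (_ : unit) := state c.+1.
exists 'I_(N + p), (state 0), (fun c : 'I_(N + p) => asbool (L c)), step.
have run_size w : foldl step (state 0) w = state (size w).
  by elim/last_ind: w => // w x IH; rewrite foldl_rcons IH /step stateS size_rcons.
by move=> w; rewrite run_size asboolE; apply: periodic_fromP.
Qed.

End Reduce.

Lemma eq_in_mkseq T (f g : nat -> T) n :
  (forall i, i < n -> f i = g i) -> mkseq f n = mkseq g n.
Proof. by move=> fg; apply/eq_in_map => i; rewrite mem_iota => /andP[_ /fg]. Qed.

Lemma conv_succ m : conv m.+1 m.+1 = rcons (conv m m) (true, true).
Proof.
rewrite /conv !maxnn mkseqS !ltnSn; congr rcons.
by apply: eq_in_mkseq => i lt_im; congr pair; apply/idP/idP; lia.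
Qed.

Lemma conv_succl m n : n <= m -> conv m.+1 n = rcons (conv m n) (true, false).
Proof.
move=> le_nm; rewrite /conv.
have -> : maxn m.+1 n = (maxn m n).+1 by lia.
have -> : maxn m n = m by lia.
rewrite mkseqS ltnSn; have -> : (m < n) = false by lia.
by congr rcons; apply: eq_in_mkseq => i lt_im; congr pair; apply/idP/idP; lia.
Qed.

Lemma conv_succr m n : m <= n -> conv m n.+1 = rcons (conv m n) (false, true).
Proof.
move=> le_mn; rewrite /conv.
have -> : maxn m n.+1 = (maxn m n).+1 by lia.
have -> : maxn m n = n by lia.
rewrite mkseqS ltnSn; have -> : (n < m) = false by lia.
by congr rcons; apply: eq_in_mkseq => i lt_in; congr pair; apply/idP/idP; lia.
Qed.

Section PeriodicRelation.
Variables (N p : nat) (R : nat -> nat -> Prop).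
Hypothesis p_gt0 : 0 < p.
Local Notation state := (state N p_gt0).

(* A state records the reduced length of the common prefix of the two padded
   words and, once one word has ended, which one is longer and the reduced
   length of the excess. *)
Local Notation St := (option ('I_(N + p) * option (bool * 'I_(N + p)))).

Definition rel_step (s : St) (x : bool * bool) : St :=
  match s, x with
  | Some (c, None), (true, true) => Some (state c.+1, None)
  | Some (c, None), (true, false) => Some (c, Some (true, state 1))
  | Some (c, None), (false, true) => Some (c, Some (false, state 1))
  | Some (c, Some (b, d)), _ =>
      if x == (b, ~~ b) then Some (c, Some (b, state d.+1)) else None
  | _, _ => None
  end.

Definition rel_accept (s : St) : bool :=
  match s with
  | None => false
  | Some (c, None) => asbool (R c c)
  | Some (c, Some (true, d)) => asbool (R (c + d) c)
  | Some (c, Some (false, d)) => asbool (R c (c + d))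
  end.

Definition rel_run (w : seq (bool * bool)) : St :=
  foldl rel_step (Some (state 0, None)) w.

Lemma rel_run_rcons w x : rel_run (rcons w x) = rel_step (rel_run w) x.
Proof. exact: foldl_rcons. Qed.

Lemma rel_run_diag k : rel_run (conv k k) = Some (state k, None).
Proof. by elim: k => // k IH; rewrite conv_succ rel_run_rcons IH /= stateS. Qed.

Lemma rel_run_left k d :
  rel_run (conv (k + d.+1) k) = Some (state k, Some (true, state d.+1)).
Proof.
elim: d => [|d IH]; first by rewrite addn1 conv_succl // rel_run_rcons rel_run_diag.
by rewrite (addnS k d.+1) conv_succl ?rel_run_rcons ?IH /= ?eqxx ?stateS //; lia.
Qed.

Lemma rel_run_right k d :
  rel_run (conv k (k + d.+1)) = Some (state k, Some (false, state d.+1)).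
Proof.
elim: d => [|d IH]; first by rewrite addn1 conv_succr // rel_run_rcons rel_run_diag.
by rewrite (addnS k d.+1) conv_succr ?rel_run_rcons ?IH /= ?eqxx ?stateS //; lia.
Qed.

Lemma rel_run_cases w :
  [\/ rel_run w = None,
      exists k, w = conv k k,
      exists k d, w = conv (k + d.+1) k
    | exists k d, w = conv k (k + d.+1)].
Proof.
elim/last_ind: w => [|w x IH]; first by apply: Or42; exists 0.
rewrite rel_run_rcons.
case: IH => [->|[k ->]|[k [d ->]]|[k [d ->]]]; first by apply: Or41.
- case: x => [[] []].
  + by apply: Or42; exists k.+1; rewrite conv_succ.
  + by apply: Or43; exists k, 0; rewrite addn1 conv_succl.
  + by apply: Or44; exists k, 0; rewrite addn1 conv_succr.
  + by apply: Or41; rewrite rel_run_diag.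
- case: x => [[] []]; try by apply: Or41; rewrite rel_run_left.
  by apply: Or43; exists k, d.+1; rewrite (addnS k d.+1) conv_succl //; lia.
- case: x => [[] []]; try by apply: Or41; rewrite rel_run_right.
  by apply: Or44; exists k, d.+1; rewrite (addnS k d.+1) conv_succr //; lia.
Qed.

Hypothesis R_periodic : periodic_rel_from N p R.

Lemma R_reduce_diag k : R k k <-> R (reduce N p k) (reduce N p k).
Proof.
case: R_periodic => R_shift _ _.
by apply: (@periodic_fromP N p (fun k => R k k)) => j le_Nj; apply: R_shift.
Qed.

Lemma R_reduce_left k e :
  R (k + e) k <-> R (reduce N p k + reduce N p e) (reduce N p k).
Proof.
case: R_periodic => R_shift _ R_shiftl.
rewrite (@periodic_fromP N p (fun e => R (k + e) k)); last first.
  by move=> j le_Nj; rewrite addnA; apply: R_shiftl; lia.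
apply: (@periodic_fromP N p (fun k => R (k + reduce N p e) k)) => j le_Nj.
by rewrite -addnA (addnC p) addnA; apply: R_shift; lia.
Qed.

Lemma R_reduce_right k e :
  R k (k + e) <-> R (reduce N p k) (reduce N p k + reduce N p e).
Proof.
case: R_periodic => R_shift R_shiftr _.
rewrite (@periodic_fromP N p (fun e => R k (k + e))); last first.
  by move=> j le_Nj; rewrite addnA; apply: R_shiftr; lia.
apply: (@periodic_fromP N p (fun k => R k (k + reduce N p e))) => j le_Nj.
by rewrite -addnA (addnC p) addnA; apply: R_shift; lia.
Qed.

Lemma regular_rel_periodic : regular_rel R.
Proof.
exists St, (Some (state 0, None)), rel_accept, rel_step => w.
rewrite -/(rel_run w); split.
  case=> m [n [->]]; case: (ltngtP m n) => [lt_mn|lt_nm|<-].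
  - have n_eq : n = m + (n - m).-1.+1 by lia.
    by rewrite n_eq rel_run_right /= asboolE R_reduce_right.
  - have m_eq : m = n + (m - n).-1.+1 by lia.
    by rewrite m_eq rel_run_left /= asboolE R_reduce_left.
  - by rewrite rel_run_diag /= asboolE R_reduce_diag.
case: (rel_run_cases w) => [->//|[k ->]|[k [d ->]]|[k [d ->]]].
- by rewrite rel_run_diag /= asboolE -R_reduce_diag => Rkk; exists k, k.
- rewrite rel_run_left /= asboolE => Rkd; exists (k + d.+1), k.
  by rewrite R_reduce_left.
- rewrite rel_run_right /= asboolE => Rkd; exists k, (k + d.+1).
  by rewrite R_reduce_right.
Qed.

End PeriodicRelation.

Section Template.
Variables (V : finType) (t0 t1 : V).
Local Notation n := #|V|.

Lemma card_V_gt0 : 0 < n.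
Proof. exact: leq_ltn_trans (leq0n _) (ltn_ord (enum_rank t0)). Qed.

Definition encode (x : nat * V) : nat := x.1 * n + enum_rank x.2.

Definition decode k : nat * V :=
  (k %/ n, enum_val (Ordinal (ltn_pmod k card_V_gt0) : 'I_#|V|)).

Lemma decodeK : cancel decode encode.
Proof. by move=> k; rewrite /encode /decode /= enum_valK /= -divn_eq. Qed.

Lemma encodeK : cancel encode decode.
Proof.
case=> j t; rewrite /decode /encode /=.
have lt_tn : enum_rank t < n := ltn_ord _.
rewrite divnMDl ?card_V_gt0 // divn_small // addn0; congr pair.
rewrite -[t in RHS]enum_rankK; congr enum_val; apply: val_inj => /=.
by rewrite modnMDl modn_small.
Qed.

Lemma decode_addn k : decode (k + n) = ((decode k).1.+1, (decode k).2).
Proof.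
rewrite /decode /=; congr pair.
  by rewrite divnDr ?dvdnn // divnn card_V_gt0 addn1.
by congr enum_val; apply: val_inj; rewrite /= modnDr.
Qed.

Lemma decode_addn_pos k : n <= k ->
  exists j t, decode k = (j.+1, t) /\ decode (k + n) = (j.+2, t).
Proof.
move=> le_nk; rewrite decode_addn; exists (k %/ n).-1, (decode k).2.
have : 0 < k %/ n by rewrite divn_gt0 ?card_V_gt0.
by rewrite /decode /=; case: (k %/ n).
Qed.

(* The representative of a class of [S_equiv]: a copy of [t0] other than the
   first is replaced by the [t1] it is glued to, or, when [t0 = t1], by the
   first copy of [t0]. *)
Definition normal (x : nat * V) : nat * V :=
  if (x.2 == t0) && (0 < x.1) then
    (if t0 == t1 then (0, t0) else (x.1.-1, t1))
  else x.

Ltac simpl_eqs := repeat (progress simpl || match goal with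
  | e : ?a <> ?b |- context [?b == ?a] => rewrite (eq_sym b a)
  | e : ?a <> ?b |- context [?a == ?b] => rewrite (introF eqP e)
  | e : ?a <> ?b, h : context [?b == ?a] |- _ => rewrite (eq_sym b a) in h
  | e : ?a <> ?b, h : context [?a == ?b] |- _ => rewrite (introF eqP e) in h
  | h : context [?a == ?a] |- _ => rewrite eqxx in h
  | |- context [?a == ?a] => rewrite eqxx
  end).

Ltac normal_cases j t :=
  case: j => [|j]; rewrite /normal /=;
  case: (t =P t0) => [->|?]; case: (t0 =P t1) => [?|?]; subst; simpl_eqs; try done.

Lemma normal_fixE x : (normal x == x) = ~~ ((x.2 == t0) && (0 < x.1)).
Proof.
case: x => j t; rewrite /normal /=.
case: (t =P t0) => [->|]; case: j => [|j] //=; rewrite ?eqxx //=.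
by case: (t0 =P t1) => _ //=; apply/negbTE/eqP; case=> ?; lia.
Qed.

Lemma normal_idem x : normal (normal x) = normal x.
Proof. by case: x => j t; normal_cases j t. Qed.

Lemma normal_succ j a i t : normal (j, a) = (i.+1, t) -> normal (j.+1, a) = (i.+2, t).
Proof. by normal_cases j a; case=> ? ?; subst. Qed.

Lemma normal_succ_inv j a i t : normal (j, a) = (i.+1, t) ->
  exists2 j', j = j'.+1 & normal (j', a) = (i, t).
Proof. by normal_cases j a; case=> ? ?; subst; eexists. Qed.

Lemma normal_copy j a i t : normal (j, a) = (i, t) ->
  i <= j <= i.+1 \/ [/\ t0 = t1, a = t0, i = 0 & t = t0].
Proof.
by normal_cases j a; case=> ? ?; subst;
  first [by left; lia | by right; split].
Qed.

Lemma normal_star j : t0 = t1 -> normal (j, t0) = (0, t0).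
Proof. by move=> t01; subst; normal_cases j t1. Qed.

Lemma normal_S_base x y : S_base t0 t1 x y -> normal x = normal y.
Proof. by case: x y => [j t] [j' t'] [/= -> [-> ->]]; normal_cases j t1. Qed.

Lemma S_equiv_normal x : S_equiv t0 t1 x (normal x).
Proof.
case: x => j t; normal_cases j t; try exact: rst_refl; apply: rst_sym.
- elim: j => [|j IH]; first exact: rst_step.
  by apply: rst_trans IH _; apply: rst_step.
- exact: rst_step.
Qed.

Lemma S_equivE x y : S_equiv t0 t1 x y <-> normal x = normal y.
Proof.
split; first by elim=> {x y} [x y /normal_S_base|x|x y _ ->|x y z _ -> _ ->].
move=> nxy; apply: rst_trans (S_equiv_normal x) _.
by rewrite nxy; apply: rst_sym; apply: S_equiv_normal.
Qed.

Definition is_code k : bool := ~~ ((k %% n == enum_rank t0) && (n <= k)).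

Lemma is_codeE k : is_code k = (normal (decode k) == decode k).
Proof.
rewrite normal_fixE /decode /is_code /=; congr (~~ (_ && _)); last first.
  by rewrite divn_gt0 // card_V_gt0.
apply/eqP/eqP => [rk_t0|<-]; last by rewrite enum_valK.
by rewrite (_ : Ordinal _ = enum_rank t0) ?enum_rankK //; apply: val_inj.
Qed.

Lemma is_code_normal k : is_code k -> normal (decode k) = decode k.
Proof. by rewrite is_codeE => /eqP. Qed.

Lemma is_code_encode x : is_code (encode (normal x)).
Proof. by rewrite is_codeE encodeK normal_idem. Qed.

Lemma is_code_addn k : n <= k -> is_code (k + n) = is_code k.
Proof. by move=> le_nk; rewrite /is_code modnDr leq_addl le_nk. Qed.

Definition code_vertex (u : {k | is_code k}) : S_vert t0 t1 :=
  exist _ (S_equiv t0 t1 (decode (sval u))) (ex_intro _ (decode (sval u)) erefl).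

Lemma S_vert_inj (C D : S_vert t0 t1) : sval C = sval D -> C = D.
Proof. by case: C D => [C ?] [D ?] /= CD; subst; f_equal; apply: proof_irrelevance. Qed.

Lemma code_vertex_surj C : exists u, code_vertex u = C.
Proof.
case: C => C [y C_eq]; exists (exist _ (encode (normal y)) (is_code_encode y)).
apply: S_vert_inj; rewrite /= C_eq; apply: functional_extensionality => z.
apply: propositional_extensionality.
by rewrite !S_equivE encodeK normal_idem.
Qed.

Lemma code_vertexE u (hu : is_code u) z :
  sval (code_vertex (exist _ u hu)) z <-> decode u = normal z.
Proof. by rewrite /= S_equivE is_code_normal. Qed.

(* [S_edge eta] is convertible to [S_related (fun a b => eta a b)]. *)
Definition S_related (P : V -> V -> Prop) (C D : S_vert t0 t1) : Prop :=
  exists j a b, P a b /\ sval C (j, a) /\ sval D (j, b).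

Lemma S_vert_eqE C D : C = D <-> S_related eq C D.
Proof.
split=> [<-|[j [a [_ [<- [Cja Dja]]]]]].
  case: C => C [[j a] C_eq]; exists j, a, a.
  by rewrite /= C_eq; split=> //; split; apply: rst_refl.
apply: S_vert_inj; case: C D Cja Dja => [C [x C_eq]] [D [y D_eq]] /=.
rewrite C_eq D_eq => xja yja; apply: functional_extensionality => z.
apply: propositional_extensionality.
by move: xja yja; rewrite !S_equivE => -> ->.
Qed.

Definition code_rel (P : V -> V -> Prop) u v : Prop :=
  [/\ is_code u, is_code v &
      exists j a b, [/\ P a b, decode u = normal (j, a) & decode v = normal (j, b)]].

Lemma code_vertex_related P u v :
  (exists hu hv, S_related P (code_vertex (exist _ u hu)) (code_vertex (exist _ v hv)))
  <-> code_rel P u v.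
Proof.
split=> [[hu [hv [j [a [b [Pab []]]]]]]|[hu hv [j [a [b [Pab]]]]]].
  by rewrite !code_vertexE => ua vb; split=> //; exists j, a, b.
by move=> ua vb; exists hu, hv, j, a, b; split; [|split]; rewrite // code_vertexE.
Qed.

Lemma code_rel_shift P u v : 3 * n <= u -> 3 * n <= v ->
  code_rel P (u + n) (v + n) <-> code_rel P u v.
Proof.
move=> le_u le_v.
have [iu [tu [du du']]] := @decode_addn_pos u ltac:(lia).
have [iv [tv [dv dv']]] := @decode_addn_pos v ltac:(lia).
rewrite /code_rel !is_code_addn ?du ?du' ?dv ?dv'; try lia.
split=> -[hu hv [j [a [b [Pab ua vb]]]]]; split=> //.
- have [ju ju_eq ua'] := normal_succ_inv (esym ua).
  have [jv jv_eq vb'] := normal_succ_inv (esym vb).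
  have ju_jv : ju = jv by lia.
  by exists ju, a, b; rewrite ua' ju_jv vb'.
- by exists j.+1, a, b; rewrite (normal_succ (esym ua)) (normal_succ (esym vb)).
Qed.

Lemma code_rel_far j a b u v : u + 3 * n <= v ->
  decode u = normal (j, a) -> decode v = normal (j, b) ->
  [/\ t0 = t1, a = t0 & decode u = (0, t0)].
Proof.
move=> le_uv ua vb.
have : u %/ n + 3 <= v %/ n by rewrite -(divnDMl 3 u card_V_gt0) leq_div2r.
move: ua vb; rewrite /decode => /esym ua /esym vb le_q.
case: (normal_copy ua) => [?|[t01 a_t0 -> ->]] //.
by case: (normal_copy vb) => [?|[_ _ v0 _]]; lia.
Qed.

Lemma code_rel_shiftr P u v : u + 3 * n <= v ->
  code_rel P u (v + n) <-> code_rel P u v.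
Proof.
move=> le_uv.
have [iv [tv [dv dv']]] := @decode_addn_pos v ltac:(lia).
rewrite /code_rel is_code_addn; last by lia.
split=> -[hu hv [j [a [b [Pab ua vb]]]]]; split=> //.
- have [t01 a_t0 u0] := @code_rel_far j a b u (v + n) ltac:(lia) ua vb.
  move: vb; rewrite dv' => /esym /normal_succ_inv [j' _ vb].
  by exists j', a, b; split; rewrite // ?u0 ?a_t0 ?normal_star ?dv.
- have [t01 a_t0 u0] := code_rel_far le_uv ua vb.
  move: vb; rewrite dv => /esym /normal_succ vb.
  by exists j.+1, a, b; split; rewrite // ?u0 ?a_t0 ?normal_star ?dv'.
Qed.

Lemma code_rel_sym P u v : code_rel P u v <-> code_rel (fun a b => P b a) v u.
Proof. by split=> -[hu hv [j [a [b [Pab ua vb]]]]]; split=> //; exists j, b, a. Qed.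

Lemma code_rel_periodic P : periodic_rel_from (3 * n) n (code_rel P).
Proof.
split; [exact: code_rel_shift | exact: code_rel_shiftr |].
by move=> u v le_vu; rewrite !(code_rel_sym P); apply: code_rel_shiftr.
Qed.

End Template.

Theorem lemma6p5 (V : finType) (eta : rel V) (t0 t1 : V) :
  (shallow_star eta t0 t1 \/ periodic_path eta t0 t1) ->
  unary_FA_presentable (@S_edge V eta t0 t1).
Proof.
move=> _; have n_gt0 := card_V_gt0 t0.
exists (fun k => is_code t0 k), (@code_vertex V t0 t1); split.
- apply: (@regular_unary_periodic #|V| _ n_gt0) => k le_nk.
  by rewrite is_code_addn.
- exact: code_vertex_surj.
- apply: (@regular_rel_ext _ (code_rel t0 t1 eq)).
    move=> u v; rewrite -(code_vertex_related _ _ eq).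
    by split=> -[hu [hv /S_vert_eqE]]; exists hu, hv.
  exact: regular_rel_periodic n_gt0 (code_rel_periodic _ _ _).
- apply: (@regular_rel_ext _ (code_rel t0 t1 (fun a b => eta a b))).
    by move=> u v; apply: code_vertex_related.
  exact: regular_rel_periodic n_gt0 (code_rel_periodic _ _ _).
Qed.
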